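(* Let $E$ be a real topological vector space, $\Omega$ a nonempty open subset of $E$, and $f_0,\dots,f_m:\Omega\to\mathbb{R}$ functions. Let $\hat{x}$ be a solution of the problem $$(\mathcal{Q}_1)\qquad \min f_0(x)\quad\text{subject to } x\in\Omega,\ f_i(x)\le0\ \text{for all } i\in\{1,\dots,m\}.$$ Assume: (a) for every $j\in\{i\in\{1,\dots,m\}:f_i(\hat{x})<0\}$, $f_j$ is upper semicontinuous at $\hat{x}$; (b) for every $i\in\{0,\dots,m\}$, $f_i$ is $D^+_M$-differentiable at $\hat{x}$. Then there exist $\lambda^0,\dots,\lambda^m\in\mathbb{R}_+$ such that: (i) $(\lambda^0,\dots,\lambda^m)\neq(0,\dots,0)$; (ii) $\lambda^if_i(\hat{x})=0$ for all $i\in\{1,\dots,m\}$; (iii) $\sum_{i=0}^m\lambda^iD^+_Mf_i(\hat{x})(u)\ge0$ for all $u\in E$. If, in addition, (c) there exists $w\in E$ such that $D^+_Mf_i(\hat{x})(w)<0$ for every $i\in\{1,\dots,m\}$ with $f_i(\hat{x})=0$, then one can take $\lambda^0=1$.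
   Context: For a function $f$ defined on an open set containing $x$ and $u\in E$, the upper Dini derivative is $D^+f(x)(u):=\limsup_{t\to0^+}\frac{f(x+tu)-f(x)}{t}$, with the convention $D^+f(x)(0)=0$. The modified upper Dini derivative is $D^+_Mf(x)(u):=\sup_{w\in E}\{D^+f(x)(u+w)-D^+f(x)(w)\}$. The function $f$ is $D^+_M$-differentiable at $x$ if $D^+_Mf(x)(u)$ and $D^+f(x)(u)$ are finite for every $u\in E$. *)

From HB Require Import structures.
From mathcomp Require Import all_boot all_order all_algebra.
From mathcomp Require Import all_classical all_reals all_analysis.
Set Implicit Arguments. Unset Strict Implicit. Unset Printing Implicit Defensive.
Import Order.TTheory GRing.Theory Num.Theory.
Import numFieldTopology.Exports.
Local Open Scope classical_set_scope.
Local Open Scope ring_scope.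

Section Dini.
Variables (R : realType) (E : topologicalLmodType R).

Definition dini_up (f : E -> R) (x u : E) : \bar R :=
  if u == 0 then 0%E
  else limf_esup (fun t : R => ((f (x + t *: u) - f x) / t)%:E) (0%R)^'+.

Definition dini_upM (f : E -> R) (x u : E) : \bar R :=
  ereal_sup [set (dini_up f x (u + w)%R - dini_up f x w)%E | w in [set: E]].

Definition dini_upM_differentiable (f : E -> R) (x : E) : Prop :=
  forall u : E, dini_upM f x u \is a fin_num /\ dini_up f x u \is a fin_num.

Definition usc_at (f : E -> R) (x : E) : Prop :=
  forall e : R, 0 < e -> \forall y \near x, f y < f x + e.

End Dini.

From HB Require Import structures.
From mathcomp Require Import all_boot all_order all_algebra.
From mathcomp Require Import all_classical all_reals all_analysis.
From mathcomp Require Import ring lra.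
Import Order.TTheory GRing.Theory Num.Theory.
Import numFieldTopology.Exports.
Local Open Scope classical_set_scope.
Local Open Scope ring_scope.

(** If every active index i (the objective, or a binding constraint) had
    D^+_M f_i(x)(u) < 0, then moving from x along u would decrease f_0 and keep
    every constraint satisfied (binding ones because D^+ <= D^+_M, inactive
    ones by upper semicontinuity), contradicting optimality.  Hence for every
    u some active index has D^+_M f_i(x)(u) >= 0.  Under (b) the maps
    D^+_M f_i(x) are real-valued and sublinear, and a Gordan-type alternative
    for sublinear functions produces the multipliers, supported on the active
    indices: a finite-dimensional Hahn-Banach theorem applied to the
    sublinear function y |-> inf_u max_{i active} (y_i + D^+_M f_i(x)(u))
    gives a linear minorant sum_i lam_i y_i, and testing it on well-chosen
    y yields the sign conditions.  Under (c), lam_0 = 0 would make the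
    weighted sum negative at w, so lam_0 > 0 and we can normalise. *)

Section Sublinear.
Context {R : realType} {V : lmodType R} {P : V -> R}.
Hypotheses (P_subadd : forall u v, P (u + v) <= P u + P v)
  (P_poshom : forall c u, 0 < c -> P (c *: u) = c * P u).

Lemma poshom0 : P 0 = 0.
Proof. by have := @P_poshom 2 0 (ltr0Sn _ 1); rewrite scaler0 => h; lra. Qed.

Lemma hahn_banach_step (Z : set V) (l : V -> R) (e : V) :
    Z 0 -> (forall z z', Z z -> Z z' -> Z (z + z')) ->
    (forall c z, 0 < c -> Z z -> Z (c *: z)) ->
    (forall u v, l (u + v) = l u + l v) -> (forall c u, l (c *: u) = c * l u) ->
    (forall z, Z z -> l z <= P z) ->
  exists c, forall z s, Z z -> l z + s * c <= P (z + s *: e).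
Proof.
move=> Z0 ZD ZZ lD lZ lP.
have sep z z' : Z z -> Z z' -> l z - P (z - e) <= P (z' + e) - l z'.
  move=> Zz Zz'; rewrite lerBrDr addrAC lerBlDr -lD.
  apply: le_trans (lP _ (ZD _ _ Zz Zz')) _.
  by rewrite -[z + z']addr0 -(addNr e) addrACA addrC P_subadd.
(* Any c between sup_z (l z - P (z - e)) and inf_z' (P (z' + e) - l z') works. *)
pose S := [set l z - P (z - e) | z in Z].
have S_ub z' : Z z' -> ubound S (P (z' + e) - l z').
  by move=> Zz' _ [z Zz <-]; exact: sep.
have le_supS z' : Z z' -> sup S <= P (z' + e) - l z'.
  by move=> Zz'; apply: ge_sup; [exists (l 0 - P (0 - e)), 0 | exact: S_ub].
have supS_ge z : Z z -> l z - P (z - e) <= sup S.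
  by move=> Zz; apply: ub_le_sup; [exists (P (0 + e) - l 0); exact: S_ub | exists z].
have rescaleP r z e' : 0 < r -> P (z + r *: e') = r * P (r^-1 *: z + e').
  by move=> r0; rewrite -P_poshom // scalerDr scalerA mulfV ?gt_eqF // scale1r.
have rescalel r z : 0 < r -> l z = r * l (r^-1 *: z).
  by move=> r0; rewrite lZ mulrA mulfV ?gt_eqF // mul1r.
exists (sup S) => z s Zz.
have Zinv r : 0 < r -> Z (r^-1 *: z) by move=> r0; apply: ZZ; rewrite ?invr_gt0.
have [s_lt0|s_gt0|->] := ltgtP s 0; last by rewrite mul0r scale0r !addr0 lP.
- have r_gt0 : 0 < - s by rewrite oppr_gt0.
  have := ler_wpM2l (ltW r_gt0) (supS_ge _ (Zinv _ r_gt0)).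
  by rewrite mulrBr -rescalel // -rescaleP // scaleNr scalerN opprK; lra.
- have := ler_wpM2l (ltW s_gt0) (le_supS _ (Zinv _ s_gt0)).
  by rewrite mulrBr -rescalel // -rescaleP //; lra.
Qed.
End Sublinear.

Lemma finite_hahn_banach {R : realType} {N : nat} (P : ('I_N -> R) -> R) :
    (forall y z, P (y + z) <= P y + P z) ->
    (forall c y, 0 < c -> P (c *: y) = c * P y) ->
  exists lam : 'I_N -> R, forall y, \sum_i lam i * y i <= P y.
Proof.
move=> P_subadd P_poshom.
have addE (y z : 'I_N -> R) i : (y + z) i = y i + z i by [].
have scaleE a (y : 'I_N -> R) i : (a *: y) i = a * y i by [].
pose Z k := [set y : 'I_N -> R | forall i : 'I_N, (k <= i)%N -> y i = 0].
suff ext k : exists lam : 'I_N -> R, forall y, Z k y -> \sum_i lam i * y i <= P y.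
  by have [lam lamP] := ext N; exists lam => y; apply: lamP => i; rewrite leqNgt ltn_ord.
elim: k => [|k [lam IH]].
  exists 0 => y y0; have -> : y = 0 by apply/funext => i; exact: y0.
  by rewrite (poshom0 P_poshom) big1 // => i _; rewrite mul0r.
have [kN|Nk] := ltnP k N; last first.
  by exists lam => y Zy; apply: IH => i ki; have := leq_trans Nk ki; rewrite leqNgt ltn_ord.
pose e := Ordinal kN; pose delta : 'I_N -> R := fun i => (i == e)%:R.
pose l y := \sum_i lam i * y i.
have [c cP] : exists c, forall y s, Z k y -> l y + s * c <= P (y + s *: delta).
  apply: hahn_banach_step => //.
  - by move=> y z Zy Zz i ki; rewrite addE Zy ?Zz ?addr0.
  - by move=> a y _ Zy i ki; rewrite scaleE Zy ?mulr0.
  - by move=> y z; rewrite /l -big_split; apply: eq_bigr => i _; rewrite addE mulrDr.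
  - by move=> a y; rewrite /l mulr_sumr; apply: eq_bigr => i _; rewrite scaleE mulrCA.
exists (fun i => if i == e then c else lam i) => y Zy.
pose y' i := if i == e then 0 else y i.
have Zy' : Z k y'.
  move=> i ki; rewrite /y'; case: eqVneq => // ie; apply: Zy.
  by rewrite ltn_neqAle ki andbT; apply: contra ie => /eqP ik; apply/eqP/val_inj.
have -> : \sum_i (if i == e then c else lam i) * y i = l y' + y e * c.
  rewrite /l (bigD1 e) // [in RHS](bigD1 e) //= /y' !eqxx mulr0 add0r addrC mulrC.
  by congr (_ + _); apply: eq_bigr => i /negPf ->.
have yE : y' + y e *: delta = y.
  by apply/funext => i; rewrite addE scaleE /y' /delta; case: eqVneq => [->|];
    rewrite ?add0r ?mulr1 ?mulr0 ?addr0.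
by have := cP _ (y e) Zy'; rewrite yE.
Qed.

Lemma sum_mul_delta (R : pzSemiRingType) (I : finType) (F : I -> R) (j : I) :
  \sum_i F i * (i == j)%:R = F j.
Proof. by rewrite (bigD1 j) //= eqxx mulr1 big1 ?addr0 // => i /negPf ->; rewrite mulr0. Qed.

Section MaxIn.
Context {R : realType} {I : finType} {A : pred I} {i0 : I}.
Hypothesis Ai0 : A i0.
Implicit Types z : I -> R.

Definition max_in (z : I -> R) : R := z (Order.arg_max i0 A z).

Lemma max_in_ge z {i} : A i -> z i <= max_in z.
Proof. by rewrite /max_in; case: arg_maxP => // j _ /[apply]. Qed.

Lemma max_in_le z b : (forall i, A i -> z i <= b) -> max_in z <= b.
Proof. by rewrite /max_in; case: arg_maxP => // j Aj _; apply. Qed.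

Lemma le_max_in2 z z' : (forall i, A i -> z i <= z' i) -> max_in z <= max_in z'.
Proof. by move=> zz'; apply: max_in_le => i Ai; exact: le_trans (zz' i Ai) (max_in_ge _ Ai). Qed.

Lemma max_inD z z' : max_in (fun i => z i + z' i) <= max_in z + max_in z'.
Proof. by apply: max_in_le => i Ai; apply: lerD; apply: max_in_ge. Qed.

Lemma max_inZ c z : 0 < c -> max_in (fun i => c * z i) = c * max_in z.
Proof.
move=> c_gt0; apply/eqP; rewrite eq_le; apply/andP; split.
  by apply: max_in_le => i Ai; rewrite ler_pM2l // max_in_ge.
by rewrite /max_in; case: (arg_maxP z Ai0) => j Aj _; apply: (max_in_ge (fun i => c * z i)).
Qed.

End MaxIn.

Arguments max_in {R I} A i0 z.

Section SublinearAlternative.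
Context {R : realType} {E : lmodType R} {N : nat} {A : pred 'I_N} {p : 'I_N -> E -> R}.
Hypotheses (p_subadd : forall i u v, p i (u + v) <= p i u + p i v)
  (p_poshom : forall i c u, 0 < c -> p i (c *: u) = c * p i u)
  (p_active : forall u, exists2 i, A i & 0 <= p i u).

Let A_nonempty : exists i, A i.
Proof. by have [i Ai _] := p_active 0; exists i. Qed.

Let i0 := xchoose A_nonempty.
Let Ai0 : A i0 := xchooseP A_nonempty.

Let value_set (y : 'I_N -> R) := [set max_in A i0 (fun i => y i + p i u) | u in [set: E]].
Let value y := inf (value_set y).

Let value_lbound y : has_lbound (value_set y).
Proof.
exists (- \sum_j `|y j|) => _ [u _ <-]; have [i Ai pi_ge0] := p_active u.
apply: le_trans (max_in_ge Ai0 _ Ai); rewrite -(lerDl (y i)) in pi_ge0.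
apply: le_trans pi_ge0; apply: lerNnormlW.
by rewrite (bigD1 i) //= lerDl sumr_ge0.
Qed.

Let value_le_max y u : value y <= max_in A i0 (fun i => y i + p i u).
Proof. by apply: ge_inf; [exact: value_lbound | exists u]. Qed.

Let value_le y u b : (forall i, A i -> y i + p i u <= b) -> value y <= b.
Proof. by move=> yb; apply: le_trans (value_le_max y u) _; exact: (max_in_le Ai0). Qed.

Let value_ge y b : (forall u, b <= max_in A i0 (fun i => y i + p i u)) -> b <= value y.
Proof.
move=> b_le; apply: lb_le_inf; last by move=> _ [u _ <-].
by exists (max_in A i0 (fun i => y i + p i 0)), 0.
Qed.

Let value_subadd y z : value (fun i => y i + z i) <= value y + value z.
Proof.
rewrite -lerBlDr; apply: value_ge => v; rewrite lerBlDr -lerBlDl.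
apply: value_ge => u; rewrite lerBlDl.
apply: le_trans (value_le_max _ (u + v)) _.
apply: le_trans _ (max_inD Ai0 (fun i => y i + p i v) (fun i => z i + p i u)).
by apply: (le_max_in2 Ai0) => i _; have := p_subadd i u v; lra.
Qed.

Let value_poshom c y : 0 < c -> value (fun i => c * y i) = c * value y.
Proof.
move=> c_gt0; have c_neq0 : c != 0 by rewrite gt_eqF.
apply/eqP; rewrite eq_le; apply/andP; split.
  rewrite -ler_pdivrMl //; apply: value_ge => u; rewrite ler_pdivrMl //.
  rewrite -(max_inZ Ai0) //; apply: (value_le _ (c *: u)) => i Ai.
  by rewrite p_poshom // -mulrDr (max_in_ge Ai0 (fun i => c * (y i + p i u)) Ai).
apply: value_ge => u; apply: le_trans (ler_wpM2l (ltW c_gt0) (value_le_max y (c^-1 *: u))) _.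
rewrite -(max_inZ Ai0) //; apply: (le_max_in2 Ai0) => i _.
by rewrite p_poshom ?invr_gt0 // mulrDr mulrA mulfV // mul1r.
Qed.

Lemma sublinear_alternative : exists lam : 'I_N -> R,
  [/\ forall i, 0 <= lam i, forall i, ~~ A i -> lam i = 0,
      exists i, lam i != 0 & forall u, 0 <= \sum_i lam i * p i u].
Proof.
have [lam lamP] := finite_hahn_banach value value_subadd value_poshom.
have p0 i : p i 0 = 0 := poshom0 (p_poshom i).
have sum_mulN y : \sum_i lam i * - y i = - \sum_i lam i * y i.
  by rewrite -sumrN; apply: eq_bigr => i _; rewrite mulrN.
have lam_ge0 j : 0 <= lam j.
  have := lamP (fun i => - (i == j)%:R); rewrite sum_mulN sum_mul_delta.
  suff : value (fun i => - (i == j)%:R) <= 0 by lra.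
  by apply: (value_le _ 0) => i _; rewrite p0 addr0 oppr_le0.
exists lam; split => //.
- move=> j Aj; apply/eqP; rewrite eq_le lam_ge0 andbT.
  have := lamP (fun i => (i == j)%:R); rewrite sum_mul_delta => /le_trans; apply.
  apply: (value_le _ 0) => i Ai; rewrite p0 addr0.
  by case: eqVneq Ai => [->|]; [rewrite (negbTE Aj) | rewrite lexx].
- have := lamP (fun=> - 1); rewrite sum_mulN; under eq_bigr do rewrite mulr1.
  have : value (fun=> - 1) <= - 1 by apply: (value_le _ 0) => i _; rewrite p0 addr0.
  move=> value_le_N1 sum_le_value.
  have [|i /andP[_ lam_i_gt0]] := @psumr_neq0P _ _ xpredT lam (fun i _ => lam_ge0 i).
    by move=> sum_eq0; move: sum_le_value; rewrite sum_eq0; lra.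
  by exists i; rewrite gt_eqF.
- move=> u; have := lamP (fun i => - p i u); rewrite sum_mulN.
  have : value (fun i => - p i u) <= 0 by apply: (value_le _ u) => i _; rewrite addNr.
  lra.
Qed.

End SublinearAlternative.

Lemma at_right0_scale {R : realType} {c : R} {V : set R} : 0 < c ->
  (0:R)^'+ V -> (0:R)^'+ [set t | V (c * t)].
Proof.
move=> c_gt0 [e /= e_gt0 eV]; exists (e / c) => /=; first by rewrite divr_gt0.
move=> t /=; rewrite !sub0r !normrN => te t_gt0; apply: eV; last by rewrite mulr_gt0.
by rewrite /= sub0r normrN normrM gtr0_norm // -ltr_pdivlMl // mulrC.
Qed.

Lemma limf_esupZl {T : choiceType} {X : filteredType T} (R : realType)
    (h : X -> \bar R) (F : set_system X) (c : R) : 0 < c ->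
  limf_esup (fun t => c%:E * h t)%E F = (c%:E * limf_esup h F)%E.
Proof.
move=> c_gt0; rewrite /limf_esup -ereal_inf_pZl //; congr ereal_inf.
apply/seteqP; split=> [_ [V FV <-]|_ [_ [V FV <-] <-]].
  by exists (ereal_sup (h @` V)); [exists V | rewrite -ereal_sup_pZl // image_comp].
by exists V => //; rewrite -ereal_sup_pZl // image_comp.
Qed.

Lemma limf_esup_at_right0_scale {R : realType} (h : R -> \bar R) (c : R) : 0 < c ->
  limf_esup (fun t => h (c * t)) (0:R)^'+ = limf_esup h (0:R)^'+.
Proof.
move=> c_gt0; have cK t : c * (c^-1 * t) = t by rewrite mulrA mulfV ?mul1r ?gt_eqF.
rewrite /limf_esup; congr ereal_inf; apply/seteqP; split=> _ [V FV <-].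
- exists [set c * t | t in V]; last by rewrite image_comp.
  have ci_gt0 : 0 < c^-1 by rewrite invr_gt0.
  apply: filterS (at_right0_scale ci_gt0 FV) => s /= Vs.
  by exists (c^-1 * s); rewrite ?cK.
- exists [set t | V (c * t)]; first exact: at_right0_scale.
  congr ereal_sup; apply/seteqP; split=> _ [t Vt <-]; first by exists (c * t).
  by exists (c^-1 * t); rewrite /= cK.
Qed.

Lemma ray_cvg (R : realType) (E : topologicalLmodType R) (x u : E) :
  x + t *: u @[t --> (0:R)^'+] --> x.
Proof.
apply: cvg_at_right_filter; rewrite -[X in _ --> X]addr0.
apply: (@continuous2_cvg _ _ _ _ _ _ (fun=> x) (fun t : R => (t : R^o) *: u) +%R).
- exact: (@add_continuous _ (x, 0)).
- exact: cvg_cst.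
rewrite -[X in _ --> X](scale0r u).
apply: (@continuous2_cvg _ _ _ _ _ _ (fun t : R => (t : R^o)) (fun=> u) *:%R).
- exact: (@scale_continuous _ _ ((0:R^o), u)).
- exact: cvg_id.
- exact: cvg_cst.
Qed.

Section UpperDini.
Context {R : realType} {E : topologicalLmodType R} {f : E -> R} {x : E}.

Lemma dini_up0 : dini_up f x 0 = 0%E.
Proof. by rewrite /dini_up eqxx. Qed.

Lemma dini_upZ c u : 0 < c -> dini_up f x (c *: u) = (c%:E * dini_up f x u)%E.
Proof.
move=> c_gt0; rewrite /dini_up scaler_eq0 gt_eqF //=; case: eqP => _; first by rewrite mule0.
rewrite -limf_esupZl // -[RHS](limf_esup_at_right0_scale _ _ c_gt0).
congr limf_esup; apply/funext => t; rewrite -EFinM scalerA (mulrC t c).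
(* at t = 0 both quotients are 0, since x / 0 = 0 *)
have [->|t_neq0] := eqVneq t 0; first by rewrite !(mulr0, mul0r, invr0).
by congr EFin; field; rewrite t_neq0 gt_eqF.
Qed.

Lemma dini_up_le_dini_upM u : (dini_up f x u <= dini_upM f x u)%E.
Proof.
apply: ereal_sup_ubound; exists 0 => //.
by rewrite addr0 dini_up0 sube0.
Qed.

Lemma dini_up_lt0_near u : (dini_up f x u < 0)%E ->
  \forall t \near (0:R)^'+, f (x + t *: u) < f x.
Proof.
rewrite /dini_up; case: eqP => [_|_]; first by rewrite ltxx.
move=> /ereal_inf_lt[_ [V FV <-] supV_lt0].
near=> t.
have Vt : V t by near: t.
have t_gt0 : 0 < t by near: t; exact: nbhs_right_gt.
have := le_lt_trans (ereal_sup_ubound (ex_intro2 _ _ t Vt erefl)) supV_lt0.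
by rewrite lte_fin pmulr_llt0 ?invr_gt0 // subr_lt0.
Unshelve. all: by end_near.
Qed.

Lemma dini_upM_lt0_near u : (dini_upM f x u < 0)%E ->
  \forall t \near (0:R)^'+, f (x + t *: u) < f x.
Proof. by move=> /(le_lt_trans (dini_up_le_dini_upM u)); exact: dini_up_lt0_near. Qed.

Section Differentiable.
Hypothesis f_diff : dini_upM_differentiable f x.

Let d u := fine (dini_up f x u).
Let dM u := fine (dini_upM f x u).

Let dE u : dini_up f x u = (d u)%:E.
Proof. by rewrite fineK //; case: (f_diff u). Qed.

Let dME u : dini_upM f x u = (dM u)%:E.
Proof. by rewrite fineK //; case: (f_diff u). Qed.

Let dM_ge u w : d (u + w) - d w <= dM u.
Proof. by rewrite -lee_fin EFinB -!dE -dME; apply: ereal_sup_ubound; exists w. Qed.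

Let dM_le u b : (forall w, d (u + w) - d w <= b) -> dM u <= b.
Proof.
move=> db; rewrite -lee_fin -dME; apply: ge_ereal_sup => _ [w _ <-].
by rewrite !dE -EFinB lee_fin.
Qed.

Lemma dini_upM_subadd u v : dM (u + v) <= dM u + dM v.
Proof. by apply: dM_le => w; have := dM_ge u (v + w); have := dM_ge v w; rewrite addrA; lra. Qed.

Lemma dini_upM_poshom c u : 0 < c -> dM (c *: u) = c * dM u.
Proof.
have dZ a w : 0 < a -> d (a *: w) = a * d w.
  by move=> a_gt0; rewrite /d dini_upZ // dE.
suff le_hom a w : 0 < a -> dM (a *: w) <= a * dM w.
  move=> c_gt0; apply/eqP; rewrite eq_le le_hom //=.
  have ci_gt0 : 0 < c^-1 by rewrite invr_gt0.
  rewrite -ler_pdivlMl //; have := le_hom _ (c *: u) ci_gt0.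
  by rewrite scalerA mulVf ?gt_eqF // scale1r.
move=> a_gt0; apply: dM_le => w'.
have aK (z : E) : a *: (a^-1 *: z) = z by rewrite scalerA mulfV ?scale1r ?gt_eqF.
by rewrite -(aK w') -scalerDr !(dZ a) // -mulrBr ler_pM2l.
Qed.

End Differentiable.

End UpperDini.

Lemma weight_gt0_of_descent {R : realDomainType} {I : finType} {A : pred I} {i0 : I}
    {lam q : I -> R} :
    (forall i, 0 <= lam i) -> (exists i, lam i != 0) -> (forall i, ~~ A i -> lam i = 0) ->
    (forall i, A i -> i != i0 -> q i < 0) -> 0 <= \sum_i lam i * q i ->
  0 < lam i0.
Proof.
move=> lam_ge0 [j lam_j_neq0] lam_inactive q_lt0.
rewrite lt0r lam_ge0 andbT; apply: contraTneq => lam_i0_eq0; rewrite -ltNge.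
have q_neg i : lam i != 0 -> q i < 0.
  move=> lam_i_neq0; apply: q_lt0; first by apply: contraNT lam_i_neq0 => /lam_inactive ->.
  by apply: contraNneq lam_i_neq0 => ->; rewrite lam_i0_eq0.
rewrite (bigD1 j) //=.
have : lam j * q j < 0 by rewrite pmulr_rlt0 ?q_neg // lt0r lam_j_neq0 lam_ge0.
have : \sum_(i | i != j) lam i * q i <= 0.
  apply: sumr_le0 => i _; have [->|/q_neg/ltW] := eqVneq (lam i) 0; first by rewrite mul0r.
  exact: mulr_ge0_le0.
lra.
Qed.

Definition active {R : realType} {E : Type} {m : nat} (f : 'I_m.+1 -> E -> R) (x : E) :
  pred 'I_m.+1 := fun i => (i == ord0) || (f i x == 0).

Lemma active_dini_upM_ge0 {R : realType} {E : topologicalLmodType R} {Omega : set E}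
    {m : nat} {f : 'I_m.+1 -> E -> R} {xh : E} :
  open Omega -> Omega xh -> (forall i : 'I_m.+1, i != ord0 -> f i xh <= 0) ->
  (forall x, Omega x -> (forall i : 'I_m.+1, i != ord0 -> f i x <= 0) ->
     f ord0 xh <= f ord0 x) ->
  (forall j : 'I_m.+1, j != ord0 -> f j xh < 0 -> usc_at (f j) xh) ->
  forall u, exists2 i, active f xh i & (0 <= dini_upM (f i) xh u)%E.
Proof.
move=> oO Ox feas opt usc u.
have [//|no_active] := pselect (exists2 i, active f xh i & (0 <= dini_upM (f i) xh u)%E).
have descent i : active f xh i -> \forall t \near (0:R)^'+, f i (xh + t *: u) < f i xh.
  move=> Ai; apply: dini_upM_lt0_near; rewrite ltNge; apply/negP => ge0.
  by apply: no_active; exists i.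
have along_ray (P : set E) : (\forall y \near xh, P y) -> \forall t \near (0:R)^'+, P (xh + t *: u).
  exact: ray_cvg.
have in_Omega : \forall t \near (0:R)^'+, Omega (xh + t *: u).
  by apply: along_ray; exact: open_nbhs_nbhs.
have feasible : \forall t \near (0:R)^'+, forall i, i != ord0 -> f i (xh + t *: u) <= 0.
  apply: filter_forall => i; have [->|i_neq0] := eqVneq i ord0; first exact: nearW.
  have [fi_eq0|fi_lt0] := eqVneq (f i xh) 0.
    apply: filterS (descent i _) => [t + _|]; last by rewrite /active fi_eq0 eqxx orbT.
    by rewrite fi_eq0 => /ltW.
  have fi_lt0' : f i xh < 0 by rewrite lt_neqAle fi_lt0 feas.
  have := along_ray _ (usc i i_neq0 fi_lt0' (- f i xh) _); rewrite oppr_gt0 addrN.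
  by move=> /(_ fi_lt0'); apply: filterS => t /ltW.
have : \forall t \near (0:R)^'+, False.
  near=> t; have : f ord0 (xh + t *: u) < f ord0 xh.
    by near: t; apply: descent; rewrite /active eqxx.
  by rewrite ltNge opt //; [near: t | near: t].
by move=> /filter_ex[].
Unshelve. all: by end_near.
Qed.

Theorem theorem3p1 (R : realType) (E : topologicalLmodType R) (Omega : set E)
    (m : nat) (f : 'I_m.+1 -> E -> R) (xh : E) :
  open Omega -> Omega !=set0 ->
  (* xh solves (Q1) *)
  Omega xh -> (forall i : 'I_m.+1, i != ord0 -> f i xh <= 0) ->
  (forall x, Omega x -> (forall i : 'I_m.+1, i != ord0 -> f i x <= 0) ->
     f ord0 xh <= f ord0 x) ->
  (* (a) *)
  (forall j : 'I_m.+1, j != ord0 -> f j xh < 0 -> usc_at (f j) xh) ->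
  (* (b) *)
  (forall i : 'I_m.+1, dini_upM_differentiable (f i) xh) ->
  (exists lam : 'I_m.+1 -> R,
      (forall i, 0 <= lam i) /\
      (exists i, lam i != 0) /\
      (forall i : 'I_m.+1, i != ord0 -> lam i * f i xh = 0) /\
      (forall u : E, (0 <= \sum_(i < m.+1) (lam i)%:E * dini_upM (f i) xh u)%E))
  /\
  ((* (c) *)
   (exists w : E, forall i : 'I_m.+1, i != ord0 -> f i xh = 0 ->
       (dini_upM (f i) xh w < 0)%E) ->
   exists lam : 'I_m.+1 -> R,
      (forall i, 0 <= lam i) /\
      lam ord0 = 1 /\
      (forall i : 'I_m.+1, i != ord0 -> lam i * f i xh = 0) /\
      (forall u : E, (0 <= \sum_(i < m.+1) (lam i)%:E * dini_upM (f i) xh u)%E)).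
Proof.
move=> oO _ Ox feas opt usc f_diff.
pose p i u := fine (dini_upM (f i) xh u).
have pE i u : dini_upM (f i) xh u = (p i u)%:E by rewrite fineK //; case: (f_diff i u).
have sumE (lam : 'I_m.+1 -> R) u :
    (\sum_(i < m.+1) (lam i)%:E * dini_upM (f i) xh u)%E = (\sum_i lam i * p i u)%:E.
  by rewrite -sumEFin; apply: eq_bigr => i _; rewrite pE.
have p_active u : exists2 i, active f xh i & 0 <= p i u.
  by have [i Ai] := active_dini_upM_ge0 oO Ox feas opt usc u; rewrite pE; exists i.
have [lam [lam_ge0 lam_inactive lam_neq0 lam_sum]] := sublinear_alternative
  (fun i => dini_upM_subadd (f_diff i)) (fun i => dini_upM_poshom (f_diff i)) p_active.
have slack i : i != ord0 -> lam i * f i xh = 0.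
  move=> i_neq0; have [->|fi_neq0] := eqVneq (f i xh) 0; first by rewrite mulr0.
  by rewrite lam_inactive ?mul0r // /active negb_or i_neq0.
split.
  exists lam; split=> //; split=> [//|]; split=> [//|u].
  by rewrite sumE lee_fin lam_sum.
case=> w w_descent.
have lam0_gt0 : 0 < lam ord0.
  apply: (weight_gt0_of_descent lam_ge0 lam_neq0 lam_inactive _ (lam_sum w)) => i + i_neq0.
  by rewrite /active (negbTE i_neq0) => /eqP fi_eq0; rewrite -lte_fin -pE w_descent.
exists (fun i => lam i / lam ord0); do !split.
- by move=> i; rewrite divr_ge0 // ltW.
- by rewrite divff // gt_eqF.
- by move=> i i_neq0; rewrite mulrAC slack // mul0r.
- move=> u; rewrite sumE lee_fin.
  under eq_bigr do rewrite mulrAC.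
  by rewrite -mulr_suml divr_ge0 ?lam_sum ?ltW.
Qed.
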